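(* Let $H$ be an almost-breakable semigroup and let $x,y\in H$. Then: (i) the principal two-sided ideals $HzH$ ($z\in H$) form a chain under set inclusion; (ii) if $HxH\subsetneq HyH$, then $xyx=x$ and $xy\simeq_H yx\simeq_H x$; (iii) if $x\simeq_H y$, then $\{xy,yx\}=\{x,y\}$; (iv) there are no elements $x,y,z\in H$ with $HxH\subsetneq HyH$ and $HxH\subsetneq HzH$ such that $xy\neq x$ and $zx\neq x$; (v) if $HxH\subsetneq HyH$, $yx\neq x$, and $x'\in H$ satisfies $x\simeq_H x'$, then $x'y=x'$.
   Context: A semigroup $H$ is almost-breakable if for all $x,y\in H$, $xy\in\{x,y\}$ or $yx\in\{x,y\}$. For $z\in H$, $HzH=\{uzv:u,v\in H\}$, and $x\simeq_H y$ means $HxH=HyH$. *)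

Definition associative_op {T : Type} (op : T -> T -> T) : Prop :=
  forall a b c : T, op a (op b c) = op (op a b) c.

Definition almost_breakable {T : Type} (op : T -> T -> T) : Prop :=
  forall x y : T,
    (op x y = x \/ op x y = y) \/ (op y x = x \/ op y x = y).

Definition ideal2 {T : Type} (op : T -> T -> T) (z : T) : T -> Prop :=
  fun w => exists u v : T, w = op (op u z) v.

Definition subset {T : Type} (A B : T -> Prop) : Prop :=
  forall w, A w -> B w.

Definition set_eq {T : Type} (A B : T -> Prop) : Prop :=
  forall w, A w <-> B w.

Definition ssubset {T : Type} (A B : T -> Prop) : Prop :=
  subset A B /\ ~ set_eq A B.

Definition H_equiv {T : Type} (op : T -> T -> T) (x y : T) : Prop :=
  set_eq (ideal2 op x) (ideal2 op y).

Definition pair_eq {T : Type} (a b c d : T) : Prop :=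
  (a = c \/ a = d) /\ (b = c \/ b = d) /\ (c = a \/ c = b) /\ (d = a \/ d = b).

From Stdlib Require Import Setoid.

(* Breaking the pair (x, x) shows that every element is idempotent, and
   breaking (z, w) writes one of z, w as a product lying in the principal
   ideal of the other, which gives the chain.  If HxH is strictly contained in
   HyH then y is not in HxH, so breaking (x, y) can only give xy = x or yx = x.
   Statements (iii) and (v) rest on the sandwich rule: in a band,
   y = p y q forces p y = y = y q.  For (iv), once ba = a = ac, the elements
   u = ab and v = ca satisfy au = u, ua = a, va = v, av = a, and breaking
   (u, v) then forces u = a or v = a. *)

Lemma set_eq_sym (T : Type) (A B : T -> Prop) : set_eq A B -> set_eq B A.
Proof. intros E w; symmetry; apply E. Qed.

Lemma set_eq_trans (T : Type) (A B C : T -> Prop) :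
  set_eq A B -> set_eq B C -> set_eq A C.
Proof. intros E F w; rewrite (E w); apply F. Qed.

Lemma ssubset_eq_l (T : Type) (A A' B : T -> Prop) :
  set_eq A A' -> ssubset A B -> ssubset A' B.
Proof.
  intros E [AB nAB]; split.
  - intros w Hw; apply AB, E, Hw.
  - intro A'B; apply nAB, (set_eq_trans _ _ _ _ E A'B).
Qed.

Section AlmostBreakable.

Variables (T : Type) (op : T -> T -> T).
Hypothesis op_assoc : associative_op op.
Hypothesis op_breakable : almost_breakable op.

Lemma op_idem x : op x x = x.
Proof. destruct (op_breakable x x) as [[E | E] | [E | E]]; exact E. Qed.

Lemma op_idem_r x y : op (op x y) y = op x y.
Proof. rewrite <- op_assoc, op_idem; reflexivity. Qed.

Lemma ideal2_op_l x y : ideal2 op x (op x y).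
Proof. exists x, y; rewrite op_idem; reflexivity. Qed.

Lemma ideal2_op_r x y : ideal2 op y (op x y).
Proof. exists x, y; rewrite op_idem_r; reflexivity. Qed.

Lemma ideal2_refl x : ideal2 op x x.
Proof. rewrite <- (op_idem x) at 2; apply ideal2_op_l. Qed.

Lemma ideal2_subset x y : ideal2 op y x -> subset (ideal2 op x) (ideal2 op y).
Proof.
  intros [u [v ->]] w [s [t ->]].
  exists (op s u), (op v t); rewrite !op_assoc; reflexivity.
Qed.

Lemma H_equiv_of_ideal2 x y : ideal2 op y x -> ideal2 op x y -> H_equiv op x y.
Proof. intros Hx Hy w; split; apply ideal2_subset; assumption. Qed.

Lemma H_equiv_mem x y : H_equiv op x y -> ideal2 op x y.
Proof. intro E; apply E, ideal2_refl. Qed.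

Lemma ideal2_chain z w :
  subset (ideal2 op z) (ideal2 op w) \/ subset (ideal2 op w) (ideal2 op z).
Proof.
  destruct (op_breakable z w) as [[E | E] | [E | E]].
  - left; apply ideal2_subset; rewrite <- E; apply ideal2_op_r.
  - right; apply ideal2_subset; rewrite <- E; apply ideal2_op_l.
  - left; apply ideal2_subset; rewrite <- E; apply ideal2_op_l.
  - right; apply ideal2_subset; rewrite <- E; apply ideal2_op_r.
Qed.

Lemma sandwich_absorb_l p y q : y = op (op p y) q -> op p y = y.
Proof.
  intro Ey; rewrite Ey at 1.
  rewrite !op_assoc, op_idem, <- Ey; reflexivity.
Qed.

Lemma sandwich_absorb_r p y q : y = op (op p y) q -> op y q = y.
Proof. intro Ey; rewrite Ey at 1; rewrite op_idem_r, <- Ey; reflexivity. Qed.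

Lemma right_identity_sym a b : op a b = a -> ideal2 op a b -> op b a = b.
Proof.
  intros Eab [s [t Eb]].
  assert (Eb' : b = op (op (op s a) b) t) by (rewrite <- (op_assoc s a b), Eab; exact Eb).
  pose proof (sandwich_absorb_l _ _ _ Eb') as Esab.
  assert (Eba : op b a = op s a).
  { rewrite <- Esab, <- !op_assoc, (op_assoc a b a), Eab, op_idem; reflexivity. }
  rewrite <- Esab at 2; rewrite <- Eba, <- op_assoc, Eab; reflexivity.
Qed.

Lemma left_identity_sym a b : op b a = a -> ideal2 op a b -> op a b = b.
Proof.
  intros Eba [s [t Eb]].
  assert (Eb' : b = op (op s b) (op a t))
    by (rewrite op_assoc, <- (op_assoc s b a), Eba; exact Eb).
  pose proof (sandwich_absorb_r _ _ _ Eb') as Ebat.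
  assert (Eab : op a b = op a t).
  { rewrite <- Ebat, !op_assoc, <- (op_assoc a b a), Eba, op_idem; reflexivity. }
  rewrite <- Ebat at 2; rewrite <- Eab, op_assoc, Eba; reflexivity.
Qed.

Lemma ssubset_ideal2_absorb x y :
  ssubset (ideal2 op x) (ideal2 op y) -> op x y = x \/ op y x = x.
Proof.
  intros [xy nxy].
  assert (y_notin : ~ ideal2 op x y)
    by (intro Hy; apply nxy, H_equiv_of_ideal2; [apply xy, ideal2_refl | exact Hy]).
  destruct (op_breakable x y) as [[E | E] | [E | E]]; auto;
    exfalso; apply y_notin; rewrite <- E; [apply ideal2_op_l | apply ideal2_op_r].
Qed.

Lemma H_equiv_op_l x y : op (op x y) x = x -> H_equiv op (op x y) x.
Proof.
  intro E; apply H_equiv_of_ideal2; [apply ideal2_op_l |].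
  rewrite <- E at 2; apply ideal2_op_l.
Qed.

Lemma H_equiv_op_r x y : op (op x y) x = x -> H_equiv op (op y x) x.
Proof.
  intro E; rewrite <- op_assoc in E.
  apply H_equiv_of_ideal2; [apply ideal2_op_r |].
  rewrite <- E at 2; apply ideal2_op_r.
Qed.

Lemma ssubset_ideal2_regular x y :
  ssubset (ideal2 op x) (ideal2 op y) ->
  op (op x y) x = x /\ H_equiv op (op x y) (op y x) /\ H_equiv op (op y x) x.
Proof.
  intro xy.
  assert (Exyx : op (op x y) x = x).
  { destruct (ssubset_ideal2_absorb x y xy) as [E | E].
    - rewrite E; apply op_idem.
    - rewrite <- op_assoc, E; apply op_idem. }
  pose proof (H_equiv_op_r x y Exyx) as Eyx.
  split; [exact Exyx | split; [| exact Eyx]].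
  apply (set_eq_trans _ _ _ _ (H_equiv_op_l x y Exyx)), set_eq_sym, Eyx.
Qed.

Lemma H_equiv_pair_eq x y : H_equiv op x y -> pair_eq (op x y) (op y x) x y.
Proof.
  intro E.
  pose proof (H_equiv_mem x y E) as Hy.
  pose proof (H_equiv_mem y x (set_eq_sym _ _ _ E)) as Hx.
  unfold pair_eq; destruct (op_breakable x y) as [[Exy | Exy] | [Eyx | Eyx]].
  - rewrite Exy, (right_identity_sym x y Exy Hy); tauto.
  - rewrite Exy, (left_identity_sym y x Exy Hx); tauto.
  - rewrite Eyx, (left_identity_sym x y Eyx Hy); tauto.
  - rewrite Eyx, (right_identity_sym y x Eyx Hx); tauto.
Qed.

Lemma breakable_pair_absorb u v a :
  op a u = u -> op u a = a -> op v a = v -> op a v = a -> u = a \/ v = a.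
Proof.
  intros Eau Eua Eva Eav.
  destruct (op_breakable u v) as [[E | E] | [E | E]].
  - left; rewrite <- E, <- Eva, op_assoc, E; exact Eua.
  - right; rewrite <- E, <- Eau, <- op_assoc, E; exact Eav.
  - right; rewrite <- Eva, <- Eua at 1; rewrite op_assoc, E; exact Eua.
  - left; rewrite <- Eau, <- Eav at 1; rewrite <- op_assoc, E; exact Eav.
Qed.

Lemma ssubset_ideal2_absorb2 a b c :
  ssubset (ideal2 op a) (ideal2 op b) -> ssubset (ideal2 op a) (ideal2 op c) ->
  op a b = a \/ op c a = a.
Proof.
  intros ab ac.
  destruct (ssubset_ideal2_absorb a b ab) as [Eab | Eba]; [now left |].
  destruct (ssubset_ideal2_absorb a c ac) as [Eac | Eca]; [| now right].
  apply breakable_pair_absorb.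
  - rewrite op_assoc, op_idem; reflexivity.
  - rewrite <- op_assoc, Eba; apply op_idem.
  - apply op_idem_r.
  - rewrite op_assoc, Eac; apply op_idem.
Qed.

Lemma H_equiv_ssubset_absorb x y x' :
  ssubset (ideal2 op x) (ideal2 op y) -> op y x <> x -> H_equiv op x x' ->
  op x' y = x'.
Proof.
  intros xy Nyx E.
  destruct (ssubset_ideal2_absorb x y xy) as [Exy | Eyx]; [| contradiction].
  destruct (H_equiv_pair_eq x x' E) as [_ [[Ex'x | Ex'x] _]].
  - destruct (ssubset_ideal2_absorb x' y (ssubset_eq_l _ _ _ _ E xy))
      as [Ex'y | Eyx']; [exact Ex'y |].
    exfalso; apply Nyx; rewrite <- Ex'x at 1; rewrite op_assoc, Eyx'; exact Ex'x.
  - rewrite <- Ex'x at 1; rewrite <- op_assoc, Exy; exact Ex'x.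
Qed.

End AlmostBreakable.

Theorem lemma4p1 (T : Type) (op : T -> T -> T)
  (Hassoc : associative_op op) (Hab : almost_breakable op) (x y : T) :
  (* (i) principal two-sided ideals form a chain *)
  (forall z w : T, subset (ideal2 op z) (ideal2 op w) \/ subset (ideal2 op w) (ideal2 op z))
  (* (ii) *)
  /\ (ssubset (ideal2 op x) (ideal2 op y) ->
        op (op x y) x = x /\ H_equiv op (op x y) (op y x) /\ H_equiv op (op y x) x)
  (* (iii) *)
  /\ (H_equiv op x y -> pair_eq (op x y) (op y x) x y)
  (* (iv) *)
  /\ (~ exists a b c : T,
          ssubset (ideal2 op a) (ideal2 op b) /\ ssubset (ideal2 op a) (ideal2 op c) /\
          op a b <> a /\ op c a <> a)
  (* (v) *)
  /\ (forall x' : T, ssubset (ideal2 op x) (ideal2 op y) -> op y x <> x ->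
        H_equiv op x x' -> op x' y = x').
Proof.
  split; [| split; [| split; [| split]]].
  - intros z w; apply ideal2_chain; assumption.
  - apply ssubset_ideal2_regular; assumption.
  - apply H_equiv_pair_eq; assumption.
  - intros [a [b [c [ab [ac [Nab Nca]]]]]].
    destruct (ssubset_ideal2_absorb2 T op Hassoc Hab a b c ab ac); contradiction.
  - intros x'; apply H_equiv_ssubset_absorb; assumption.
Qed.
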